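(* Let $A\in\mathscr{B}(\Omega)$ satisfy $\underline{P}(A)=0$ and $\overline{P}(A)=1$. Then for any $B\in\mathscr{B}(\Omega)$ with $\underline{P}(B)>0$, $$\underline{P}_{\mathfrak{G}}(A\mid B)=0,\quad\overline{P}_{\mathfrak{G}}(A\mid B)=1,\quad \underline{P}_{\mathfrak{B}}(A\mid B)=0,\quad\overline{P}_{\mathfrak{B}}(A\mid B)=1.$$
   Context: $\Omega$ is a separable, completely metrizable space with Borel $\sigma$-algebra $\mathscr{B}(\Omega)$; $\underline{P}$ is a Choquet capacity of order 2 on $\mathscr{B}(\Omega)$ (a coherent lower probability with weakly compact set of dominating measures satisfying $\underline{P}(A\cup B)\ge\underline{P}(A)+\underline{P}(B)-\underline{P}(A\cap B)$); $\Pi=\{P:P\ge\underline{P}\}$, $\underline{P}(A)=\inf_{P\in\Pi}P(A)$, $\overline{P}(A)=\sup_{P\in\Pi}P(A)=1-\underline{P}(A^c)$. Generalized Bayes rule: $\underline{P}_{\mathfrak{B}}(A\mid B)=\inf_{P\in\Pi}P(A\cap B)/P(B)$, $\overline{P}_{\mathfrak{B}}(A\mid B)=\sup_{P\in\Pi}P(A\cap B)/P(B)$. Geometric rule: $\underline{P}_{\mathfrak{G}}(A\mid B)=\inf_{P\in\Pi}P(A\cap B)/\inf_{P\in\Pi}P(B)$, $\overline{P}_{\mathfrak{G}}(A\mid B)=1-\underline{P}_{\mathfrak{G}}(A^c\mid B)$. *)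

From HB Require Import structures.
From mathcomp Require Import all_boot all_order all_algebra.
From mathcomp Require Import all_classical all_reals all_analysis.
Set Implicit Arguments. Unset Strict Implicit. Unset Printing Implicit Defensive.
Import Order.TTheory GRing.Theory Num.Theory.
Import numFieldNormedType.Exports.
Local Open Scope classical_set_scope.
Local Open Scope ring_scope.

Definition Omega (T : ptopologicalType) := g_sigma_algebraType (@open T).

Definition separable_space (T : ptopologicalType) : Prop :=
  exists D : set T, countable D /\ closure D = setT.

Definition completely_metrizable (R : realType) (T : ptopologicalType) : Prop :=
  exists dist : T -> T -> R,
    [/\ (forall x y, 0 <= dist x y) /\
        (forall x y, (dist x y = 0) <-> (x = y)),
        (forall x y, dist x y = dist y x),
        (forall x y z, dist x z <= dist x y + dist y z),
        (forall U : set T, (open U) <->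
           (forall x, U x -> exists2 e : R, 0 < e & [set y | dist x y < e] `<=` U))
      & (forall u : nat -> T,
           (forall e : R, 0 < e -> exists N, forall m n, (N <= m)%N -> (N <= n)%N ->
                dist (u m) (u n) < e) ->
           exists l, forall e : R, 0 < e -> exists N, forall n, (N <= n)%N ->
                dist (u n) l < e)].

Section Capacity.
Context {R : realType} {T : ptopologicalType}.
Local Notation Om := (Omega T).
Local Notation prob := (probability Om R).

Definition weak_cvg (Pn : nat -> prob) (P : prob) : Prop :=
  forall f : T -> R, continuous f -> (exists M : R, forall x, `|f x| <= M) ->
    (fun n => (\int[Pn n]_x (f x)%:E)%E) @ \oo --> (\int[P]_x (f x)%:E)%E.

(* Weak compactness of a set of probability measures.  Since Omega is Polish,
   the weak topology is metrizable, so compactness = sequential compactness. *)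
Definition weakly_compact (Pi : set prob) : Prop :=
  forall Pn : nat -> prob, (forall n, Pi (Pn n)) ->
    exists2 phi : nat -> nat, (forall m n, (m < n)%N -> (phi m < phi n)%N) &
      exists2 P, Pi P & weak_cvg (Pn \o phi) P.

Definition core (LP : set Om -> R) : set prob :=
  [set P : prob | forall A : set Om, measurable A -> (LP A)%:E <= P A]%E.

Definition choquet2 (LP : set Om -> R) : Prop :=
  [/\ core LP !=set0,
      (forall A : set Om, measurable A ->
          LP A = inf [set fine (P A) | P in core LP]),
      weakly_compact (core LP)
    & (forall A B : set Om, measurable A -> measurable B ->
          LP A + LP B - LP (A `&` B) <= LP (A `|` B))].

Definition lowerP (LP : set Om -> R) (A : set Om) : R :=
  inf [set fine (P A) | P in core LP].
Definition upperP (LP : set Om -> R) (A : set Om) : R :=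
  sup [set fine (P A) | P in core LP].

Definition lowerB (LP : set Om -> R) (A B : set Om) : R :=
  inf [set fine (P (A `&` B)) / fine (P B) | P in core LP].
Definition upperB (LP : set Om -> R) (A B : set Om) : R :=
  sup [set fine (P (A `&` B)) / fine (P B) | P in core LP].

Definition lowerG (LP : set Om -> R) (A B : set Om) : R :=
  lowerP LP (A `&` B) / lowerP LP B.
Definition upperG (LP : set Om -> R) (A B : set Om) : R :=
  1 - lowerG LP (~` A) B.

End Capacity.

From HB Require Import structures.
From mathcomp Require Import all_boot all_order all_algebra.
From mathcomp Require Import all_classical all_reals all_analysis.
Import Order.TTheory GRing.Theory Num.Theory.
Import numFieldNormedType.Exports.
Local Open Scope classical_set_scope.
Local Open Scope ring_scope.

(* Lower envelopes over the core are monotone, and for each P in the core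
   P (X `&` B) / P B * lowerP B <= P (X `&` B) <= P X, whence
   lowerB X B * lowerP B <= lowerP X.  So lowerP A = 0 forces
   lowerP (A `&` B) = 0 and lowerB A B = 0. *)

Lemma sup_onemE {R : realType} {I : Type} {C : set I} {f : I -> R} {m : R} :
  C !=set0 -> (forall i, C i -> m <= f i) ->
  sup [set 1 - f i | i in C] = 1 - inf [set f i | i in C].
Proof.
move=> [i0 Ci0] lbf.
have fC_lb : has_lbound [set f i | i in C] by exists m => _ [i Ci <-]; exact: lbf.
have onemC_ub : has_ubound [set 1 - f i | i in C].
  by exists (1 - m) => _ [i Ci <-]; rewrite lerB // lbf.
apply/le_anti/andP; split.
  apply: ge_sup; first by exists (1 - f i0), i0.
  by move=> _ [i Ci <-]; rewrite lerB //; apply: ge_inf => //; exists i.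
rewrite lerBlDr addrC -lerBlDr; apply: lb_le_inf; first by exists (f i0), i0.
by move=> _ [i Ci <-]; rewrite lerBlDr addrC -lerBlDr; apply: ub_le_sup => //; exists i.
Qed.

Section fine_probability.
Context {d : measure_display} {T : measurableType d} {R : realType}.
Variable P : probability T R.

Lemma fine_probE {X : set T} : measurable X -> (fine (P X))%:E = P X.
Proof. by move=> mX; rewrite fineK // fin_num_measure. Qed.

Lemma fine_prob_ge0 (X : set T) : 0 <= fine (P X).
Proof. exact/fine_ge0/measure_ge0. Qed.

Lemma le_fine_prob {X Y : set T} : measurable X -> measurable Y -> X `<=` Y ->
  fine (P X) <= fine (P Y).
Proof. by move=> mX mY XY; rewrite -lee_fin !fine_probE // le_measure ?inE. Qed.

Lemma fine_probC {X : set T} : measurable X -> fine (P (~` X)) = 1 - fine (P X).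
Proof.
by move=> mX; rewrite probability_setC // fineB // fin_num_measure.
Qed.

Lemma fine_probDI {X Y : set T} : measurable X -> measurable Y ->
  fine (P X) = fine (P (X `\` Y)) + fine (P (X `&` Y)).
Proof.
move=> mX mY; rewrite (measureDI P mX mY) fineD // fin_num_measure //.
- exact: measurableD.
- exact: measurableI.
Qed.

End fine_probability.

Section core_envelopes.
Context {R : realType} {T : ptopologicalType}.
Variable LP : set (Omega T) -> R.
Hypothesis core_neq0 : core LP !=set0.

Let core_img_neq0 (f : probability (Omega T) R -> R) :
  [set f P | P in core LP] !=set0.
Proof. by case: core_neq0 => P cP; exists (f P), P. Qed.

Lemma lowerP_ge0 (X : set (Omega T)) : 0 <= lowerP LP X.
Proof. by apply: lb_le_inf => // _ [P _ <-]; exact: fine_prob_ge0. Qed.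

Lemma lowerP_le_prob (X : set (Omega T)) (P : probability (Omega T) R) :
  core LP P -> lowerP LP X <= fine (P X).
Proof.
move=> cP; apply: ge_inf; last by exists P.
by exists 0 => _ [Q _ <-]; exact: fine_prob_ge0.
Qed.

Lemma le_lowerP (X Y : set (Omega T)) : measurable X -> measurable Y ->
  X `<=` Y -> lowerP LP X <= lowerP LP Y.
Proof.
move=> mX mY XY; apply: lb_le_inf => // _ [P cP <-].
exact: le_trans (lowerP_le_prob _ _ cP) (le_fine_prob P mX mY XY).
Qed.

Lemma lowerP_setI_eq0 (X Y : set (Omega T)) : measurable X -> measurable Y ->
  lowerP LP X = 0 -> lowerP LP (X `&` Y) = 0.
Proof.
move=> mX mY X0; apply/le_anti; rewrite lowerP_ge0 andbT -X0.
by apply: le_lowerP (measurableI _ _ mX mY) mX _; exact: subIsetl.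
Qed.

Lemma upperP_setC (X : set (Omega T)) : measurable X ->
  upperP LP X = 1 - lowerP LP (~` X).
Proof.
move=> mX; rewrite /upperP /lowerP -(sup_onemE _ (fun P _ => fine_prob_ge0 P _)) //.
congr sup; apply: eq_imagel => P _.
by rewrite fine_probC // subKr.
Qed.

Lemma lowerP_setC_eq0 (X : set (Omega T)) : measurable X ->
  upperP LP X = 1 -> lowerP LP (~` X) = 0.
Proof.
move=> mX; rewrite upperP_setC // => /eqP.
by rewrite subr_eq addrC -subr_eq subrr eq_sym => /eqP.
Qed.

Variable B : set (Omega T).
Hypothesis mB : measurable B.
Hypothesis lowerP_B_gt0 : 0 < lowerP LP B.

Let prob_B_gt0 (P : probability (Omega T) R) : core LP P -> 0 < fine (P B).
Proof. by move=> cP; exact: lt_le_trans lowerP_B_gt0 (lowerP_le_prob _ _ cP). Qed.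

Let ratio_ge0 (X : set (Omega T)) (P : probability (Omega T) R) :
  0 <= fine (P (X `&` B)) / fine (P B).
Proof. by rewrite divr_ge0 // fine_prob_ge0. Qed.

Lemma lowerB_ge0 (X : set (Omega T)) : 0 <= lowerB LP X B.
Proof. by apply: lb_le_inf => // _ [P _ <-]. Qed.

Lemma lowerB_mul_le (X : set (Omega T)) : measurable X ->
  lowerB LP X B * lowerP LP B <= lowerP LP X.
Proof.
move=> mX; apply: lb_le_inf => // _ [P cP <-].
have lowerB_le : lowerB LP X B <= fine (P (X `&` B)) / fine (P B).
  by apply: ge_inf; [exists 0 => _ [Q _ <-] | exists P].
apply: le_trans (ler_wpM2l (lowerB_ge0 X) (lowerP_le_prob B _ cP)) _.
apply: le_trans (ler_wpM2r (fine_prob_ge0 P B) lowerB_le) _.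
rewrite divfK ?gt_eqF ?prob_B_gt0 //.
by apply: le_fine_prob (measurableI _ _ mX mB) mX _; exact: subIsetl.
Qed.

Lemma lowerB_eq0 (X : set (Omega T)) : measurable X ->
  lowerP LP X = 0 -> lowerB LP X B = 0.
Proof.
move=> mX X0; apply/le_anti; rewrite lowerB_ge0 andbT.
by rewrite -(ler_pM2r lowerP_B_gt0) mul0r -X0 lowerB_mul_le.
Qed.

Lemma upperB_setC (X : set (Omega T)) : measurable X ->
  upperB LP X B = 1 - lowerB LP (~` X) B.
Proof.
move=> mX; rewrite /upperB /lowerB -(sup_onemE _ (fun P _ => ratio_ge0 _ P)) //.
congr sup; apply: eq_imagel => P cP.
have PB_neq0 : fine (P B) != 0 by rewrite gt_eqF ?prob_B_gt0.
rewrite -[in 1 - _](divff PB_neq0) -mulrBl (fine_probDI P mB mX).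
by rewrite setDE !(setIC B) [_ + _ - _]addrC addKr.
Qed.

End core_envelopes.

Theorem theorem5p8 (R : realType) (T : ptopologicalType)
  (HT : separable_space T /\ completely_metrizable R T)
  (LP : set (Omega T) -> R) (HLP : choquet2 LP)
  (A : set (Omega T)) (mA : measurable A)
  (hA0 : lowerP LP A = 0) (hA1 : upperP LP A = 1) :
  forall B : set (Omega T), measurable B -> 0 < lowerP LP B ->
    [/\ lowerG LP A B = 0, upperG LP A B = 1,
        lowerB LP A B = 0 & upperB LP A B = 1].
Proof.
move=> B mB lowerP_B_gt0; case: HLP => core_neq0 _ _ _.
have mCA : measurable (~` A) by exact: measurableC.
have hCA0 : lowerP LP (~` A) = 0 by exact: lowerP_setC_eq0.
split.
- by rewrite /lowerG lowerP_setI_eq0 // mul0r.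
- by rewrite /upperG /lowerG lowerP_setI_eq0 // mul0r subr0.
- exact: lowerB_eq0.
- by rewrite upperB_setC // lowerB_eq0 // subr0.
Qed.
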